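(* Let $u\geqslant0$ be an integer. There exists a set $\mathfrak{B}$ of integer $2\times3$ matrices which is the disjoint union of two subsets $\mathfrak{B}^{\mathrm{I}}$ and $\mathfrak{B}^{\mathrm{II}}$ with $|\mathfrak{B}^{\mathrm{I}}|=14u+12$ and $|\mathfrak{B}^{\mathrm{II}}|=2u$, such that $\sigma_r(M)=(0,0)$ and $\sigma_c(M)=(-2,1,1)$ for all $M\in\mathfrak{B}^{\mathrm{I}}$, $\sigma_r(M)=(-1,1)$ and $\sigma_c(M)=(-2,1,1)$ for all $M\in\mathfrak{B}^{\mathrm{II}}$, and the multiset of absolute values of all entries of all matrices in $\mathfrak{B}$ is exactly the set $$\begin{aligned}&[24u+36,32u+34]_2\cup[32u+37,36u+47]_2\cup[40u+49,44u+59]_2\cup[48u+61,96u+83]_2\cup[96u+84,128u+107]\\&\cup[152u+144,158u+149]\cup[162u+150,164u+155]\cup[168u+156,192u+167]\end{aligned}$$ (each element occurring once).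
   Context: For integers $a\equiv b\pmod d$ with $d\geqslant1$, $[a,b]_d=\{a+id: 0\leqslant i\leqslant (b-a)/d\}$ if $a\leqslant b$ and $[a,b]_d=\varnothing$ if $a>b$; $[a,b]=[a,b]_1$. For a matrix $M$, $\sigma_r(M)$ is the sequence of its row sums and $\sigma_c(M)$ the sequence of its column sums. *)

From mathcomp Require Import all_boot all_order all_algebra.
Set Implicit Arguments. Unset Strict Implicit. Unset Printing Implicit Defensive.
Import Order.TTheory GRing.Theory Num.Theory.

(* [a,b]_d as a sequence of naturals (a <= b, a = b mod d assumed by callers):
   {a + i d : 0 <= i <= (b-a)/d} if a <= b, empty otherwise. *)
Definition ivl_step (a b d : nat) : seq nat :=
  if a <= b then [seq a + i * d | i <- iota 0 ((b - a) %/ d).+1] else [::].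

Definition ivl (a b : nat) : seq nat := ivl_step a b 1.

Local Open Scope ring_scope.

Definition sigma_r (m n : nat) (M : 'M[int]_(m, n)) : seq int :=
  [seq \sum_(j < n) M i j | i <- enum 'I_m].
Definition sigma_c (m n : nat) (M : 'M[int]_(m, n)) : seq int :=
  [seq \sum_(i < m) M i j | j <- enum 'I_n].

Definition entries (m n : nat) (M : 'M[int]_(m, n)) : seq int :=
  [seq M i j | i <- enum 'I_m, j <- enum 'I_n].

Definition abs_entries (m n : nat) (B : seq 'M[int]_(m, n)) : seq nat :=
  flatten [seq [seq absz x | x <- entries M] | M <- B].

Definition target_set (u : nat) : seq nat :=
  ivl_step (24*u+36) (32*u+34) 2 ++ ivl_step (32*u+37) (36*u+47) 2 ++
  ivl_step (40*u+49) (44*u+59) 2 ++ ivl_step (48*u+61) (96*u+83) 2 ++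
  ivl (96*u+84) (128*u+107) ++ ivl (152*u+144) (158*u+149) ++
  ivl (162*u+150) (164*u+155) ++ ivl (168*u+156) (192*u+167).

From mathcomp Require Import all_boot all_order all_algebra.
From mathcomp Require Import zify.
Import Order.TTheory GRing.Theory Num.Theory.
Local Open Scope ring_scope.

(* Every matrix used is a "tile"
     [[ k,     m + 1, -n    ],
      [ -(k+2), -m,   n + 1 ]]   with n = k + m + e,
   whose column sums are (-2, 1, 1) and whose row sums are (1 - e, e - 1),
   so e = 1 gives the matrices of B^I and e = 2 those of B^II.  Its absolute
   values are k, k+2, m, m+1, n, n+1.  Letting t run over [0, len) with
   k = k0 + 4t and m = m0 - 2t, a block of tiles covers [k0, k0 + 4 len)_2,
   (m0 + 1 - 2 len, m0 + 1] and [n0, n0 + 2 len) with n0 = k0 + m0 + e.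
   Four blocks cover the target set, which has exactly six times as many
   elements as there are tiles; a covering of a duplicate-free list by a list
   of at most its size is a bijection, which gives both the equality and the
   uniqueness of the absolute values. *)

Definition tile (e k m : nat) : 'M[int]_(2, 3) :=
  \matrix_(i, j) nth 0 (nth [::] [:: [:: k%:Z; m.+1%:Z; - (k + m + e)%N%:Z];
                                 [:: - k.+2%:Z; - m%:Z; (k + m + e).+1%:Z]] i) j.

Lemma entries_tile e k m :
  entries (tile e k m) =
  [:: k%:Z; m.+1%:Z; - (k + m + e)%N%:Z; - k.+2%:Z; - m%:Z; (k + m + e).+1%:Z].
Proof. by rewrite /entries !enum_ordSl enum_ord0 /= !mxE. Qed.

Lemma abs_entries_tile e k m :
  [seq absz x | x <- entries (tile e k m)] =
  [:: k; m.+1; k + m + e; k.+2; m; (k + m + e).+1]%N.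
Proof. by rewrite entries_tile /= !abszN. Qed.

Lemma sigma_r_tile e k m : sigma_r (tile e k m) = [:: 1 - e%:Z; e%:Z - 1].
Proof.
rewrite /sigma_r !enum_ordSl enum_ord0 /= !big_ord_recl !big_ord0 /= !mxE /=.
by congr [:: _; _]; lia.
Qed.

Lemma sigma_c_tile e k m : sigma_c (tile e k m) = [:: -2; 1; 1].
Proof.
rewrite /sigma_c !enum_ordSl enum_ord0 /= !big_ord_recl !big_ord0 /= !mxE /=.
by congr [:: _; _; _]; lia.
Qed.

Section AbsEntries.

Variables m n : nat.
Implicit Types B : seq 'M[int]_(m, n).

Lemma size_abs_entries B : size (abs_entries B) = (m * n * size B)%N.
Proof.
elim: B => [|M B IHB]; first by rewrite muln0.
rewrite /abs_entries /= size_cat -/(abs_entries B).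
by rewrite IHB size_map size_allpairs !size_enum_ord mulnS.
Qed.

Lemma sub_abs_entries B1 B2 :
  {subset B1 <= B2} -> {subset abs_entries B1 <= abs_entries B2}.
Proof.
move=> sB12 x /flatten_mapP[M BM xM].
by apply/flatten_mapP; exists M; first exact: sB12.
Qed.

End AbsEntries.

Lemma abs_entries_uniq_uniq m n (B : seq 'M[int]_(m.+1, n.+1)) :
  uniq (abs_entries B) -> uniq B.
Proof.
elim: B => //= M B IHB; rewrite /abs_entries /= -/(abs_entries B).
rewrite cat_uniq => /and3P[_ disjM /IHB ->]; rewrite andbT.
apply: contra disjM => BM; apply/hasP; exists (absz (M ord0 ord0)).
  by apply/flatten_mapP; exists M => //; rewrite map_f ?allpairs_f ?mem_enum.
by rewrite map_f ?allpairs_f ?mem_enum.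
Qed.

Lemma mem_ivl_stepP a b d x :
  x \in ivl_step a b d -> exists2 i, x = (a + i * d)%N & (a <= x <= b)%N.
Proof.
rewrite /ivl_step; case: leqP => // le_ab /mapP[i].
rewrite mem_iota add0n ltnS => /andP[_ le_i] ->; exists i => //.
rewrite leq_addr -leq_subRL //; apply: leq_trans (leq_divM _ d).
by rewrite leq_mul2r le_i orbT.
Qed.

Lemma size_ivl_step a b d :
  (0 < d)%N -> size (ivl_step a b d) = ((b + d - a) %/ d)%N.
Proof.
move=> d_gt0; rewrite /ivl_step; case: leqP => le_ab.
  rewrite size_map size_iota addnC -addnBA // divnDl ?dvdnn // divnn d_gt0; lia.
by rewrite divn_small //; lia.
Qed.

Lemma uniq_ivl_step a b d : (0 < d)%N -> uniq (ivl_step a b d).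
Proof.
move=> d_gt0; rewrite /ivl_step; case: ifP => // _.
rewrite map_inj_uniq ?iota_uniq // => i j /addnI /eqP.
by rewrite eqn_pmul2r // => /eqP.
Qed.

Lemma uniq_ivl_step_cat a b d s : (0 < d)%N ->
  all (fun x => b < x)%N s -> uniq s -> uniq (ivl_step a b d ++ s).
Proof.
move=> d_gt0 /allP gt_bs uniq_s.
rewrite cat_uniq uniq_ivl_step // uniq_s andbT.
apply/hasPn => x /gt_bs lt_bx; apply/negP => /mem_ivl_stepP[_ _]; lia.
Qed.

Lemma uniq_target_set u : uniq (target_set u).
Proof.
rewrite /target_set /ivl.
do 7 (apply: uniq_ivl_step_cat => //; first (apply/allP => x;
  rewrite ?mem_cat; (repeat case/orP); move=> /mem_ivl_stepP[_ _]; lia)).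
exact: uniq_ivl_step.
Qed.

Lemma size_target_set u : size (target_set u) = (96 * u + 72)%N.
Proof. by rewrite /target_set /ivl !size_cat !size_ivl_step //; lia. Qed.

Section TileBlock.

Variables (e len k0 m0 : nat).

Definition tile_block : seq 'M[int]_(2, 3) :=
  [seq tile e (k0 + 4 * t) (m0 - 2 * t) | t <- iota 0 len].

Lemma sigma_tile_block M : M \in tile_block ->
  sigma_r M = [:: 1 - e%:Z; e%:Z - 1] /\ sigma_c M = [:: -2; 1; 1].
Proof. by case/mapP=> t _ ->; rewrite sigma_r_tile sigma_c_tile. Qed.

Lemma mem_tile_block t x : (t < len)%N ->
  x \in [seq absz y | y <- entries (tile e (k0 + 4 * t) (m0 - 2 * t))] ->
  x \in abs_entries tile_block.
Proof.
move=> lt_t_len x_t; rewrite /abs_entries; apply/flatten_mapP.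
exists (tile e (k0 + 4 * t) (m0 - 2 * t)) => //.
by apply/mapP; exists t; rewrite ?mem_iota.
Qed.

Lemma tile_block_coverK x :
  (k0 <= x < k0 + 4 * len)%N -> (2 %| x - k0)%N -> x \in abs_entries tile_block.
Proof.
move=> ? ?; apply: (@mem_tile_block ((x - k0) %/ 4)).
  by lia.
by rewrite abs_entries_tile !inE; lia.
Qed.

Hypothesis m0_ge : (2 * len <= m0 + 1)%N.

Lemma tile_block_coverM x :
  (m0 + 2 <= x + 2 * len)%N -> (x <= m0 + 1)%N -> x \in abs_entries tile_block.
Proof.
move=> ? ?; apply: (@mem_tile_block ((m0 + 1 - x) %/ 2)).
  by lia.
by rewrite abs_entries_tile !inE; lia.
Qed.

Lemma tile_block_coverN x :
  (k0 + m0 + e <= x < k0 + m0 + e + 2 * len)%N -> x \in abs_entries tile_block.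
Proof.
move=> ?; apply: (@mem_tile_block ((x - (k0 + m0 + e)) %/ 2)).
  by lia.
by rewrite abs_entries_tile !inE; lia.
Qed.

End TileBlock.

Definition BI1 u := tile_block 1 (u + 3) (32 * u + 37) (124 * u + 106).
Definition BI2 u := tile_block 1 (u + 3) (40 * u + 49) (122 * u + 100).
Definition BI3 u := tile_block 1 (12 * u + 6) (48 * u + 61) (120 * u + 94).
Definition BI u := BI1 u ++ BI2 u ++ BI3 u.
Definition BII u := tile_block 2 (2 * u) (24 * u + 36) (128 * u + 106).

Lemma target_set_sub u : {subset target_set u <= abs_entries (BI u ++ BII u)}.
Proof.
pose F := abs_entries (BI u ++ BII u).
have [in1 in2 in3 inII] : [/\ {subset abs_entries (BI1 u) <= F},
    {subset abs_entries (BI2 u) <= F}, {subset abs_entries (BI3 u) <= F} &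
    {subset abs_entries (BII u) <= F}].
  by split; apply: sub_abs_entries => M; rewrite !mem_cat => ->; rewrite ?orbT.
move=> x; rewrite /target_set /ivl !mem_cat.
case/orP=> [/mem_ivl_stepP[i -> ?]|]; first by apply/inII/tile_block_coverK; lia.
case/orP=> [/mem_ivl_stepP[i -> ?]|]; first by apply/in1/tile_block_coverK; lia.
case/orP=> [/mem_ivl_stepP[i -> ?]|]; first by apply/in2/tile_block_coverK; lia.
case/orP=> [/mem_ivl_stepP[i -> ?]|]; first by apply/in3/tile_block_coverK; lia.
case/orP=> [/mem_ivl_stepP[_ _ ?]|].
  have [?|?] := ltnP x (120 * u + 96); first by apply/in3/tile_block_coverM; lia.
  have [?|?] := ltnP x (122 * u + 102); first by apply/in2/tile_block_coverM; lia.
  have [?|?] := ltnP x (124 * u + 108); first by apply/in1/tile_block_coverM; lia.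
  by apply/inII/tile_block_coverM; lia.
case/orP=> [/mem_ivl_stepP[_ _ ?]|].
  have [?|?] := ltnP x (156 * u + 144); first by apply/inII/tile_block_coverN; lia.
  by apply/in1/tile_block_coverN; lia.
case/orP=> /mem_ivl_stepP[_ _ ?]; first by apply/in2/tile_block_coverN; lia.
by apply/in3/tile_block_coverN; lia.
Qed.

Theorem lemma2p6 (u : nat) :
  exists (BI BII : seq 'M[int]_(2, 3)),
    [/\ uniq (BI ++ BII),
        size BI = (14 * u + 12)%N &
        size BII = (2 * u)%N] /\
    (forall M, M \in BI -> sigma_r M = [:: 0; 0] /\ sigma_c M = [:: -2; 1; 1]) /\
    (forall M, M \in BII -> sigma_r M = [:: -1; 1] /\ sigma_c M = [:: -2; 1; 1]) /\
    uniq (abs_entries (BI ++ BII)) /\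
    abs_entries (BI ++ BII) =i target_set u.
Proof.
exists (BI u), (BII u).
have uniqT := uniq_target_set u; have subT := @target_set_sub u.
have size_abs : size (abs_entries (BI u ++ BII u)) = size (target_set u).
  rewrite size_abs_entries size_target_set.
  by rewrite !size_cat !size_map !size_iota; lia.
have uniq_abs : uniq (abs_entries (BI u ++ BII u)).
  by apply: leq_size_uniq uniqT subT _; rewrite size_abs.
have [_ eq_abs] := uniq_min_size uniqT subT (eq_leq size_abs).
split; [split|split; [|split; [|split]]].
- exact: abs_entries_uniq_uniq uniq_abs.
- by rewrite !size_cat !size_map !size_iota; lia.
- by rewrite size_map size_iota.
- by move=> M; rewrite !mem_cat => /or3P[] /sigma_tile_block; rewrite subrr.
- by move=> M /sigma_tile_block.
- exact: uniq_abs.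
- by move=> x; rewrite eq_abs.
Qed.
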